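(* Let $M\in\mathbb R^{n\times n}$ be sufficient, $Q\in\mathbb R^{n\times d}$, $q\in\mathbb R^n$, $S=\{Q\theta+q:\theta\in\mathbb R^d\}$, and $S^\epsilon=S+\boldsymbol\epsilon$. There exists $\delta>0$ such that $S^\epsilon$ lies in general position for every $\epsilon\in(0,\delta)$.
   Context: $\boldsymbol\epsilon=(\epsilon,\epsilon^2,\dots,\epsilon^n)^T$. Let $A=[\,I\;\;-M\,]\in\mathbb R^{n\times 2n}$, columns indexed by $\{1,\dots,2n\}$; $A_{\cdot J}$ is the submatrix of columns indexed by $J$. Complementary index: $\bar i=i+n$ if $i\le n$, $\bar i=i-n$ if $i>n$. A set $J$ is complementary if $i\in J\Rightarrow\bar i\notin J$. A complementary basis is a complementary set $B$ with $|B|=n$ and $A_{\cdot B}$ invertible. Complementary cone: $\mathcal C(J)=\{A_{\cdot J}\lambda:\lambda\ge0\}$. An affine subspace $T$ lies in general position if for every complementary basis $B$: $T\cap\mathcal C(B)\neq\emptyset$ implies $T\cap\operatorname{int}\mathcal C(B)\neq\emptyset$. $M$ is column sufficient if $[z_i(Mz)_i\le 0\ \forall i]\Rightarrow[z_i(Mz)_i=0\ \forall i]$; row sufficient if $M^T$ is column sufficient; sufficient if both. *)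

From HB Require Import structures.
From mathcomp Require Import all_boot all_order all_algebra.
Set Implicit Arguments. Unset Strict Implicit. Unset Printing Implicit Defensive.
Import Order.TTheory GRing.Theory Num.Theory.
Local Open Scope ring_scope.

Section Defs.
Variables (R : realFieldType) (n : nat).

Definition epsv (e : R) : 'cV[R]_n := \col_(i < n) e ^+ i.+1.

Definition Amat (M : 'M[R]_n) : 'M[R]_(n, n + n) := row_mx 1%:M (- M).

Definition compl_idx (i : 'I_(n + n)) : 'I_(n + n) :=
  match split i with
  | inl j => rshift n j
  | inr j => lshift n j
  end.

(* A set of column indices is given as an (ordered) injective list
   b : 'I_m -> 'I_(n+n); its column submatrix is colsub b A. *)
Definition complementary m (b : 'I_m -> 'I_(n + n)) : Prop :=
  forall k l, b l <> compl_idx (b k).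

Definition compl_basis (M : 'M[R]_n) (b : 'I_n -> 'I_(n + n)) : Prop :=
  injective b /\ complementary b /\ colsub b (Amat M) \in unitmx.

Definition ccone (M : 'M[R]_n) m (b : 'I_m -> 'I_(n + n)) (x : 'cV[R]_n) : Prop :=
  exists lam : 'cV[R]_m, (forall i, 0 <= lam i 0) /\ x = colsub b (Amat M) *m lam.

Definition interior (P : 'cV[R]_n -> Prop) (x : 'cV[R]_n) : Prop :=
  exists2 r : R, 0 < r &
    forall y : 'cV[R]_n, (forall i, `|y i 0 - x i 0| < r) -> P y.

Definition general_position (M : 'M[R]_n) (T : 'cV[R]_n -> Prop) : Prop :=
  forall b : 'I_n -> 'I_(n + n), compl_basis M b ->
    (exists x, T x /\ ccone M b x) ->
    (exists x, T x /\ interior (ccone M b) x).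

Definition column_sufficient (M : 'M[R]_n) : Prop :=
  forall z : 'cV[R]_n, (forall i, z i 0 * (M *m z) i 0 <= 0) ->
    forall i, z i 0 * (M *m z) i 0 = 0.

Definition row_sufficient (M : 'M[R]_n) : Prop := column_sufficient M^T.

Definition sufficient (M : 'M[R]_n) : Prop :=
  column_sufficient M /\ row_sufficient M.

End Defs.

(* Fix a complementary basis B with invertible A_B and put H = A_B^-1.  A point
   x lies in C(B) iff H x >= 0, and in the interior of C(B) as soon as H x > 0.
   For x = Q theta + q + eps(e) the coordinates (H x)_i are perturbed affine
   forms  p_i theta + c_i + g_i eps(e)  in theta whose perturbation rows g_i
   (the rows of H) are linearly independent.  The key lemma
   [eventually_strictly_feasible] shows that for such a system feasibility
   implies strict feasibility for all small e > 0; it is proved by induction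
   on the number of rows, eliminating a tight row on its own hyperplane and
   using that a polynomial in e with a nonzero coefficient has no small
   positive roots.  As there are finitely many candidate bases, a common
   delta exists. *)

From HB Require Import structures.
From mathcomp Require Import all_boot all_order all_algebra ring lra.
From Stdlib Require Import FunctionalExtensionality.
Set Implicit Arguments. Unset Strict Implicit. Unset Printing Implicit Defensive.
Import Order.TTheory GRing.Theory Num.Theory.
Local Open Scope ring_scope.

Section SmallEnough.
Variable R : realFieldType.

Definition small_enough (P : R -> Prop) : Prop :=
  exists2 delta : R, 0 < delta & forall t, 0 < t -> t < delta -> P t.

Lemma small_enough_impl (P Q : R -> Prop) :
  (forall t, 0 < t -> P t -> Q t) -> small_enough P -> small_enough Q.
Proof. by move=> PQ [dl dl0 HP]; exists dl => // t t0 tdl; apply/PQ/HP. Qed.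

Lemma small_enough_and (P Q : R -> Prop) :
  small_enough P -> small_enough Q -> small_enough (fun t => P t /\ Q t).
Proof.
move=> [d1 d10 H1] [d2 d20 H2]; exists (Order.min d1 d2); first by rewrite lt_min d10.
by move=> t t0; rewrite lt_min => /andP[t1 t2]; split; [exact: H1 | exact: H2].
Qed.

Lemma small_enough_all (T : finType) (P : T -> R -> Prop) :
  (forall i, small_enough (P i)) -> small_enough (fun t => forall i, P i t).
Proof.
move=> HP; suff: small_enough (fun t => forall i, i \in enum T -> P i t).
  by apply: small_enough_impl => t _ H i; apply: H; rewrite mem_enum.
elim: (enum T) => [|i s IHs]; first by exists 1.
apply: small_enough_impl (small_enough_and (HP i) IHs) => t _ [Hi Hs] j.
by rewrite inE => /orP[/eqP->|/Hs].
Qed.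

Lemma small_enough_witness (P : R -> Prop) :
  small_enough P -> exists2 t, 0 < t & P t.
Proof.
move=> [dl dl0 HP]; exists (dl / 2); first by rewrite divr_gt0.
by apply: HP; rewrite ?divr_gt0 // ltr_pdivrMr // ltr_pMr // ltr1n.
Qed.

Lemma small_perturbation_pos (a b : R) :
  0 < a -> small_enough (fun t => 0 < a + t * b).
Proof.
move=> a0; have b1 : 0 < `|b| + 1 by rewrite ltr_wpDl.
exists (a / (`|b| + 1)) => [|t t0]; first by rewrite divr_gt0.
rewrite ltr_pdivlMr // => ht.
have nb : - `|b| <= b by rewrite lerNl -normrN ler_norm.
nra.
Qed.

(* If the constant term is nonzero, c + a_1 x + ... + a_k x^k is nonzero for
   small x > 0, since the remaining terms are O(x). *)
Lemma dominant_constant k (a0 : R) (a : 'I_k -> R) :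
  a0 != 0 -> small_enough (fun x => a0 + \sum_(j < k) a j * x ^+ j.+1 != 0).
Proof.
move=> a0n; set C := \sum_(j < k) `|a j|.
have tail_bound x : 0 < x -> x <= 1 -> `|\sum_(j < k) a j * x ^+ j.+1| <= x * C.
  move=> x0 x1; apply: le_trans (ler_norm_sum _ _ _) _.
  rewrite /C mulr_sumr; apply: ler_sum => j _.
  rewrite normrM normrX (ger0_norm (ltW x0)) mulrC ler_wpM2r //.
  by rewrite exprS ler_piMr ?exprn_ile1 ?(ltW x0).
have below1 : small_enough (fun x => x <= 1) by exists 1 => // x _ /ltW.
have a0pos : 0 < `|a0| by rewrite normr_gt0.
apply: small_enough_impl (small_enough_and (small_perturbation_pos (- C) a0pos) below1).
move=> x x0 [pos x1]; apply/negP => /eqP sum0.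
have sumE : \sum_(j < k) a j * x ^+ j.+1 = - a0.
  by apply/eqP; rewrite -addr_eq0 addrC sum0.
have := tail_bound x x0 x1; rewrite sumE normrN => a0_le.
by move: pos; rewrite mulrN subr_gt0 ltNge a0_le.
Qed.

(* A polynomial a0 + a_1 x + ... + a_k x^k with some nonzero coefficient has
   no root in some interval (0, delta); factor out x while a0 = 0. *)
Lemma poly_eventually_nonzero k (a0 : R) (a : 'I_k -> R) :
  a0 != 0 \/ (exists j, a j != 0) ->
  small_enough (fun x => a0 + \sum_(j < k) a j * x ^+ j.+1 != 0).
Proof.
elim: k a0 a => [|k IH] a0 a.
  by case=> [/dominant_constant //|[[]]].
have [-> nz|a0n _] := eqVneq a0 0; last exact: dominant_constant.
have nz' : a ord0 != 0 \/ exists j, a (lift ord0 j) != 0.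
  case: nz => [/eqP //|[j]].
  by case: (unliftP ord0 j) => [j' ->|->]; [right; exists j' | left].
apply: small_enough_impl (IH _ _ nz') => x x0 nz_x.
have factor : \sum_(j < k.+1) a j * x ^+ j.+1 =
    x * (a ord0 + \sum_(j < k) a (lift ord0 j) * x ^+ j.+1).
  rewrite big_ord_recl mulrDr mulr_sumr mulrC; congr (_ + _).
  by apply: eq_bigr => j _; rewrite /= exprS mulrCA.
by rewrite add0r factor mulf_neq0 // gt_eqF.
Qed.

End SmallEnough.

Section PerturbedSystems.
Variables (R : realFieldType) (d N : nat).

(* A perturbed affine inequality  p theta + c + g eps(e) >= 0  in the unknown
   theta : R^d, where eps(e) = (e, e^2, ..., e^N). *)
Record arow := ARow { lin : 'rV[R]_d; cst : R; pert : 'rV[R]_N }.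

Definition aff (r : arow) (th : 'cV[R]_d) (e : R) : R :=
  (lin r *m th) 0 0 + cst r + (pert r *m epsv N e) 0 0.

Definition feasible m (S : 'I_m -> arow) (e : R) : Prop :=
  exists th, forall i, 0 <= aff (S i) th e.

Definition strictly_feasible m (S : 'I_m -> arow) (e : R) : Prop :=
  exists th, forall i, 0 < aff (S i) th e.

Definition indep m (G : 'I_m -> 'rV[R]_N) : Prop :=
  forall y : 'I_m -> R, \sum_i y i *: G i = 0 -> forall i, y i = 0.

Lemma aff_translate r th w e :
  aff r (th + w) e = aff r th e + (lin r *m w) 0 0.
Proof. by rewrite /aff mulmxDr !mxE; ring. Qed.

Lemma aff_segment r th0 th1 t e :
  aff r (th0 + t *: (th1 - th0)) e = aff r th0 e + t * (aff r th1 e - aff r th0 e).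
Proof.
by rewrite aff_translate -scalemxAr mulmxBr /aff !mxE; ring.
Qed.

Lemma aff_const r th e : lin r = 0 ->
  aff r th e = cst r + \sum_(j < N) pert r 0 j * e ^+ j.+1.
Proof.
move=> lin0; rewrite /aff lin0 mul0mx mxE add0r mxE.
by congr (_ + _); apply: eq_bigr => j _; rewrite /epsv mxE.
Qed.

(* If th0 is feasible and every row is strict at th0 or at th1, then a point
   slightly moved from th0 towards th1 is strictly feasible. *)
Lemma strict_from_pair m (S : 'I_m -> arow) e th0 th1 :
  (forall i, 0 <= aff (S i) th0 e) ->
  (forall i, 0 < aff (S i) th0 e \/ 0 < aff (S i) th1 e) ->
  strictly_feasible S e.
Proof.
move=> feas0 strict01.
have near i : small_enough (fun t => 0 < aff (S i) (th0 + t *: (th1 - th0)) e).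
  case: (strict01 i) => [pos0|pos1].
    have := small_perturbation_pos (aff (S i) th1 e - aff (S i) th0 e) pos0.
    by apply: small_enough_impl => t _; rewrite aff_segment.
  exists 1 => // t t0 t1; rewrite aff_segment.
  have := feas0 i; nra.
have [t _ Ht] := small_enough_witness (small_enough_all near).
by exists (th0 + t *: (th1 - th0)).
Qed.

Lemma indep_shear m (G : 'I_m.+1 -> 'rV[R]_N) (alpha : 'I_m -> R) :
  indep G -> indep (fun i => G (lift ord0 i) - alpha i *: G ord0).
Proof.
move=> indG y hy i.
pose y' j := if unlift ord0 j is Some j' then y j' else - \sum_k y k * alpha k.
have := indG y' _ (lift ord0 i); rewrite /y' liftK; apply.
rewrite big_ord_recl /y' unlift_none -[RHS]hy.
under [RHS]eq_bigr => j _ do rewrite scalerBr scalerA.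
rewrite sumrB -scaler_suml scaleNr addrC; congr (_ - _).
by apply: eq_bigr => j _; rewrite liftK.
Qed.

Lemma indep_tail m (G : 'I_m.+1 -> 'rV[R]_N) :
  indep G -> indep (fun i => G (lift ord0 i)).
Proof.
move=> /(indep_shear (alpha := fun=> 0)) indG y hy; apply: indG.
by rewrite -[RHS]hy; apply: eq_bigr => i _; rewrite scale0r subr0.
Qed.

Lemma indep_neq0 m (G : 'I_m -> 'rV[R]_N) i : indep G -> G i != 0.
Proof.
move=> indG; apply/negP => /eqP Gi0.
suff /eqP : (i == i)%:R = 0 :> R by rewrite eqxx oner_eq0.
apply: (indG (fun j => (j == i)%:R)); apply: big1 => j _.
by case: eqP => [->|_]; rewrite ?Gi0 ?scaler0 ?scale0r.
Qed.

Lemma rV_right_inverse (p : 'rV[R]_d) : p != 0 -> exists u : 'cV[R]_d, p *m u = 1%:M.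
Proof.
case/rV0Pn => j pj; exists ((p 0 j)^-1 *: delta_mx j 0).
rewrite -scalemxAr -colE [col j p]mx11_scalar mxE scale_scalar_mx.
by rewrite mulVf.
Qed.

(* For p u = 1, the affine map  phi |-> -K u + (1 - u p) phi  parametrizes the
   hyperplane  p theta + K = 0, where K is the perturbed constant of row r0. *)
Definition hyper_lift (r0 : arow) (u : 'cV[R]_d) (e : R) (ph : 'cV[R]_d) : 'cV[R]_d :=
  - (cst r0 + (pert r0 *m epsv N e) 0 0) *: u + (1%:M - u *m lin r0) *m ph.

(* Row r restricted to the hyperplane of r0: substitute theta = hyper_lift phi. *)
Definition eliminate (r0 : arow) (u : 'cV[R]_d) (r : arow) : arow :=
  let a := (lin r *m u) 0 0 in
  ARow (lin r *m (1%:M - u *m lin r0)) (cst r - a * cst r0) (pert r - a *: pert r0).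

Lemma aff_hyper_lift r0 u r e ph :
  aff r (hyper_lift r0 u e ph) e = aff (eliminate r0 u r) ph e.
Proof.
rewrite /aff /hyper_lift /= mulmxDr -scalemxAr mulmxA mulmxBl -scalemxAl.
by rewrite !mxE; ring.
Qed.

Section OnHyperplane.
Variables (r0 : arow) (u : 'cV[R]_d).
Hypothesis lin_u : lin r0 *m u = 1%:M.

Lemma hyper_lift_tight e ph : aff r0 (hyper_lift r0 u e ph) e = 0.
Proof.
rewrite /aff /hyper_lift mulmxDr mulmxA mulmxBr mulmx1 mulmxA lin_u mul1mx subrr.
by rewrite mul0mx addr0 -scalemxAr lin_u !mxE eqxx mulr1; ring.
Qed.

Lemma hyper_lift_fix e th : aff r0 th e = 0 -> hyper_lift r0 u e th = th.
Proof.
move=> tight; rewrite /hyper_lift mulmxBl mul1mx -mulmxA [lin r0 *m th]mx11_scalar.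
have -> : (lin r0 *m th) 0 0 = - (cst r0 + (pert r0 *m epsv N e) 0 0).
  by apply/eqP; rewrite -addr_eq0 addrA; apply/eqP.
by rewrite mul_mx_scalar addrC subrK.
Qed.

End OnHyperplane.

Lemma const_row_nonzero (r : arow) : lin r = 0 -> pert r != 0 ->
  small_enough (fun e => forall th, aff r th e != 0).
Proof.
move=> lin0 /rV0Pn[j gj].
have := poly_eventually_nonzero (a0 := cst r) (or_intror (ex_intro _ j gj)).
by apply: small_enough_impl => e _ nz th; rewrite aff_const.
Qed.

Definition reduced m (S : 'I_m.+1 -> arow) (u : 'cV[R]_d) : 'I_m -> arow :=
  fun i => eliminate (S ord0) u (S (lift ord0 i)).

(* If row 0 is tight at a feasible point and the reduced system is strictly
   feasible, then so is the whole system: lift a strict point of the reduced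
   system to the hyperplane, then push it off along u. *)
Lemma strict_from_tight_row m (S : 'I_m.+1 -> arow) u e th0 :
  lin (S ord0) *m u = 1%:M ->
  (feasible (reduced S u) e -> strictly_feasible (reduced S u) e) ->
  (forall i, 0 <= aff (S i) th0 e) -> aff (S ord0) th0 e = 0 ->
  strictly_feasible S e.
Proof.
move=> lin_u red_strict feas0 tight0.
have [ph strict_ph] : strictly_feasible (reduced S u) e.
  apply: red_strict; exists th0 => i.
  by rewrite -aff_hyper_lift hyper_lift_fix.
set th2 := hyper_lift (S ord0) u e ph.
have row0 : aff (S ord0) th2 e = 0 by exact: hyper_lift_tight.
have rows : forall i, 0 < aff (S (lift ord0 i)) th2 e.
  by move=> i; rewrite aff_hyper_lift; exact: strict_ph.
apply: (@strict_from_pair _ _ _ th2 (th2 + u)) => i.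
  by case: (unliftP ord0 i) => [j ->|->]; [exact/ltW/rows | rewrite row0].
case: (unliftP ord0 i) => [j ->|->]; first by left.
by right; rewrite aff_translate row0 lin_u add0r mxE ltr01.
Qed.

(* Induction on the number of
   rows: either row 0 is slack at a feasible point (combine with a strict point
   of the remaining rows), or it is tight, which is impossible if it has no
   theta-part and otherwise reduces to the eliminated system. *)
Lemma eventually_strictly_feasible m (S : 'I_m -> arow) :
  indep (fun i => pert (S i)) ->
  small_enough (fun e => feasible S e -> strictly_feasible S e).
Proof.
elim: m S => [|m IH] S indS.
  by exists 1 => // e _ _ [th _]; exists th; case.
have tail_ok := IH _ (indep_tail indS).
have tight_ok : small_enough (fun e => forall th, (forall i, 0 <= aff (S i) th e) ->
    aff (S ord0) th e = 0 -> strictly_feasible S e).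
  have [lin0|linN0] := eqVneq (lin (S ord0)) 0.
    have := const_row_nonzero lin0 (indep_neq0 ord0 indS).
    by apply: small_enough_impl => e _ nz th _ /eqP; rewrite (negbTE (nz th)).
  have [u lin_u] := rV_right_inverse linN0.
  have := IH (reduced S u) (indep_shear indS).
  by apply: small_enough_impl => e _ red th; apply: strict_from_tight_row lin_u red.
apply: small_enough_impl (small_enough_and tail_ok tight_ok).
move=> e _ [tail tight] [th0 feas0].
have [/eqP tight0|slack0] := boolP (aff (S ord0) th0 e == 0).
  exact: tight th0 feas0 tight0.
have [th1 strict1] := tail (ex_intro _ th0 (fun i => feas0 (lift ord0 i))).
apply: (strict_from_pair feas0) => i; case: (unliftP ord0 i) => [j ->|->].
  by right; exact: strict1.
by left; rewrite lt_def slack0 feas0.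
Qed.

End PerturbedSystems.

Section ComplementaryCones.
Variables (R : realFieldType) (n : nat).

Lemma ccone_inv (M : 'M[R]_n) (b : 'I_n -> 'I_(n + n)) x :
  colsub b (Amat M) \in unitmx ->
  ccone M b x <-> forall i, 0 <= (invmx (colsub b (Amat M)) *m x) i 0.
Proof.
move=> unitB; split => [[lam [lam0 ->]] i | pos]; first by rewrite mulKmx.
by exists (invmx (colsub b (Amat M)) *m x); split => //; rewrite mulKVmx.
Qed.

Lemma positive_ball (H : 'M[R]_n) (x : 'cV[R]_n) :
  (forall i, 0 < (H *m x) i 0) ->
  exists2 r : R, 0 < r & forall y : 'cV[R]_n,
    (forall j, `|y j 0 - x j 0| < r) -> forall i, 0 <= (H *m y) i 0.
Proof.
move=> pos.
have near i : small_enough (fun r => forall y : 'cV[R]_n,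
    (forall j, `|y j 0 - x j 0| < r) -> 0 <= (H *m y) i 0).
  have := small_perturbation_pos (- \sum_j `|H i j|) (pos i).
  apply: small_enough_impl => r r0 hr y hy.
  have split_y : (H *m y) i 0 = (H *m x) i 0 + \sum_j H i j * (y j 0 - x j 0).
    by rewrite !mxE -big_split; apply: eq_bigr => j _ /=; ring.
  have bound : `|\sum_j H i j * (y j 0 - x j 0)| <= (\sum_j `|H i j|) * r.
    rewrite mulr_suml; apply: le_trans (ler_norm_sum _ _ _) _.
    by apply: ler_sum => j _; rewrite normrM ler_wpM2l // ltW.
  have := ler_norm (- \sum_j H i j * (y j 0 - x j 0)); rewrite normrN split_y.
  nra.
have [r r0 Hr] := small_enough_witness (small_enough_all near).
by exists r => // y hy i; apply: Hr.
Qed.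

Lemma indep_rows_unit (H : 'M[R]_n) : H \in unitmx -> indep (fun i => row i H).
Proof.
move=> unitH y hy i.
have yH0 : \row_j y j *m H = 0.
  by rewrite mulmx_sum_row -[RHS]hy; apply: eq_bigr => j _; rewrite mxE.
have : \row_j y j = 0 by rewrite -[LHS]mulmx1 -(mulmxV unitH) mulmxA yH0 mul0mx.
by move/rowP/(_ i); rewrite !mxE.
Qed.

Definition perturbed_image d (Q : 'M[R]_(n, d)) (q : 'cV[R]_n) (e : R)
    (x : 'cV[R]_n) : Prop :=
  exists theta : 'cV[R]_d, x = Q *m theta + q + epsv n e.

Definition basis_system d (H : 'M[R]_n) (Q : 'M[R]_(n, d)) (q : 'cV[R]_n) :
    'I_n -> arow R d n :=
  fun i => ARow (row i (H *m Q)) ((H *m q) i 0) (row i H).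

Lemma aff_basis_system d H (Q : 'M[R]_(n, d)) q th e i :
  aff (basis_system H Q q i) th e = (H *m (Q *m th + q + epsv n e)) i 0.
Proof. by rewrite /aff /= -!row_mul !mulmxDr mulmxA !mxE. Qed.

(* General position for one candidate basis, for all small e > 0; only the
   invertibility of A_B is used. *)
Lemma basis_general_position d (M : 'M[R]_n) (Q : 'M[R]_(n, d)) q
    (b : 'I_n -> 'I_(n + n)) :
  small_enough (fun e => compl_basis M b ->
    (exists x, perturbed_image Q q e x /\ ccone M b x) ->
    exists x, perturbed_image Q q e x /\ interior (ccone M b) x).
Proof.
set B := colsub b (Amat M).
have [unitB|singB] := boolP (B \in unitmx); last first.
  by exists 1 => // e _ _ [_ [_ unitB]]; rewrite unitB in singB.
have indH : indep (fun i => row i (invmx B)) by apply: indep_rows_unit; rewrite unitmx_inv.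
have := eventually_strictly_feasible (S := basis_system (invmx B) Q q) indH.
apply: small_enough_impl => e _ strict _ [x [[th xE] /(ccone_inv _ unitB) xcone]].
have [th' pos] : strictly_feasible (basis_system (invmx B) Q q) e.
  by apply: strict; exists th => i; rewrite aff_basis_system -xE.
exists (Q *m th' + q + epsv n e); split; first by exists th'.
have pos_coords i : 0 < (invmx B *m (Q *m th' + q + epsv n e)) i 0.
  by rewrite -aff_basis_system.
have [r r0 ball] := positive_ball pos_coords.
by exists r => // y /ball; rewrite -ccone_inv.
Qed.

End ComplementaryCones.

Theorem mainTheorem10 (R : realFieldType) (n d : nat)
    (M : 'M[R]_n) (Q : 'M[R]_(n, d)) (q : 'cV[R]_n) :
  sufficient M ->
  exists2 delta : R, 0 < delta &
    forall e : R, 0 < e -> e < delta ->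
      general_position M
        (fun x : 'cV[R]_n => exists theta : 'cV[R]_d, x = Q *m theta + q + epsv n e).
Proof.
move=> _.
have [delta delta0 near] := small_enough_all
  (fun f : {ffun 'I_n -> 'I_(n + n)} => basis_general_position M Q q f).
exists delta => // e e0 edelta b.
have -> : b = [ffun j => b j] :> ('I_n -> 'I_(n + n)).
  by apply: functional_extensionality => j; rewrite ffunE.
exact: near.
Qed.
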